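(* Let $G=(V,E)$ be a rooted tree with root $t_0$, let $1\le p<\infty$, and let ${\bm\nu}=\{\nu_t\}_{t\in V}$, ${\bm\mu}=\{\mu_t\}_{t\in V}$ be two weights (positive sequences) over $V$ with $\sum_{t\in V}\nu_t<\infty$ and $\sum_{t\in V}\mu_t<\infty$. Suppose there is a constant $C$ such that for every sequence ${\bm b}=\{b_t\}_{t\in V}$, $$\Big(\sum_{t\in V}\nu_t\Big|\sum_{t_0\prec u\preceq t}b_u\Big|^p\Big)^{1/p}\le C\Big(\sum_{t\in V}\mu_t|b_t|^p\Big)^{1/p}.$$ Then there is a constant $C_P$, depending only on $C$ (and $p$), such that for every sequence ${\bm b}=\{b_t\}_{t\in V}$, $$\Big(\sum_{t\in V}|b_t-\bar b|^p\nu_t\Big)^{1/p}\le C_P\Big(\sum_{t\succ t_0}|b_t-b_{t_p}|^p\mu_t\Big)^{1/p},\qquad \bar b=\frac{\sum_{t\in V}b_t\nu_t}{\sum_{t\in V}\nu_t}.$$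
   Context: A tree is a connected graph without cycles; a rooted tree has a distinguished vertex $t_0$ (the root). The partial order $\preceq$ on $V$ is defined by $r\preceq t$ if $r$ lies on the unique path from $t$ to $t_0$; $r\prec t$ means $r\preceq t$ and $r\neq t$. For $t\neq t_0$, $t_p$ denotes the parent of $t$, i.e. the first vertex after $t$ on the path from $t$ to $t_0$. *)

From HB Require Import structures.
From mathcomp Require Import all_boot all_order all_algebra.
From mathcomp Require Import all_classical all_reals all_analysis.
Set Implicit Arguments. Unset Strict Implicit. Unset Printing Implicit Defensive.
Import Order.TTheory GRing.Theory Num.Theory.
Local Open Scope ring_scope.

(* A rooted tree on the vertex type V, encoded by its root, its parent map
   (t |-> t_p, with the convention parent troot = troot) and its depth map
   (graph distance to the root).  The edges of the tree are {t, parent t}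
   for t <> root. *)
Record rooted_tree (V : Type) := RootedTree {
  troot : V;
  parent : V -> V;
  depth : V -> nat;
  parent_root : parent troot = troot;
  depth_root : depth troot = 0%N;
  depth_parent : forall t, t <> troot -> depth t = (depth (parent t)).+1 }.

Definition tree_le (V : Type) (T : rooted_tree V) (r t : V) : Prop :=
  exists n : nat, iter n (parent T) t = r.

(* sum_{t0 ≺ u ⪯ t} b_u : the vertices u with root ≺ u ⪯ t are exactly
   t, t_p, (t_p)_p, ... (depth t of them, the root excluded). *)
Definition path_sum (R : realType) (V : Type) (T : rooted_tree V)
  (b : V -> R) (t : V) : R :=
  \sum_(k < depth T t) b (iter k (parent T) t).

Definition rsum (R : realType) (V : choiceType) (f : V -> R) : R :=
  fine (\esum_(t in [set: V]) (Num.max (f t) 0)%:E)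
  - fine (\esum_(t in [set: V]) (Num.max (- f t) 0)%:E).

From HB Require Import structures.
From mathcomp Require Import all_boot all_order all_algebra.
From mathcomp Require Import all_classical all_reals all_analysis.
From mathcomp Require Import lra ring zify.
Set Implicit Arguments. Unset Strict Implicit.
Import Order.TTheory GRing.Theory Num.Theory.
Local Open Scope ring_scope.

(* Telescoping: for the increments b_t - b_(t_p) (and 0 at the root) the path
   sum at t is b_t - b_(t0), so the hypothesis bounds
   sum_t nu_t |b_t - b_(t0)|^p by C^p times the right-hand side.  It remains to
   replace b_(t0) by the mean bbar.  Since |x - y|^p <= 2^p (|x|^p + |y|^p), it
   suffices to bound |bbar - b_(t0)|^p sum_t nu_t by 2^p sum_t nu_t |b_t - b_(t0)|^p,
   a weak Jensen inequality obtained by summing a^(p-1) y <= a^p + y^p with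
   a = |bbar - b_(t0)| / 2.  Hence C_P = (2^p (1 + 2^p))^(1/p) (|C| + 1). *)

Local Notation esumR f := (\esum_(t in setT) (f t)%:E)%E.
Local Notation summableR f := (summable setT (EFin \o f)).

Section real_sum.
Variables (R : realType) (V : choiceType).
Implicit Types (f g h : V -> R) (k : R).

Lemma ge0_esumZl (a : V -> \bar R) k : 0 <= k -> (forall t, 0 <= a t)%E ->
  (\esum_(t in [set: V]) (k%:E * a t) = k%:E * \esum_(t in [set: V]) a t)%E.
Proof.
move=> k0 a0; rewrite /esum -ereal_supZl//; last first.
  by apply/set0P; exists 0%E, set0; [exact: fsets_set0 | rewrite fsbig_set0].
congr ereal_sup; apply/seteqP; split=> x /=.
  by move=> [A HA <-]; exists (\sum_(i \in A) a i)%E; [exists A | rewrite ge0_mule_fsumr].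
by move=> [_ [A HA <-] <-]; exists A => //; rewrite ge0_mule_fsumr.
Qed.

Lemma summableR_le f g : (forall t, `|f t| <= `|g t|) -> summableR g -> summableR f.
Proof. by move=> fg; apply: le_lt_trans; apply: le_esum => t _; rewrite lee_fin. Qed.

Lemma ge0_summableR f : (forall t, 0 <= f t) -> (esumR f < +oo)%E -> summableR f.
Proof.
by move=> f0; apply: le_lt_trans; apply: le_esum => t _; rewrite /= ger0_norm.
Qed.

Lemma summableRZ f k : summableR f -> summableR (fun t => k * f t).
Proof.
move=> sf; rewrite /summable (eq_esum (b := fun t => `|k|%:E * `|f t|%:E)%E).
  by rewrite (ge0_esumZl (a := fun t => `|f t|%:E))// lte_mul_pinfty.
by move=> t _; rewrite /= normrM EFinM.
Qed.

Lemma ge0_esumR_fin_num f : (forall t, 0 <= f t) -> summableR f -> esumR f \is a fin_num.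
Proof.
move=> f0; rewrite summableE; congr (_ \is a fin_num); apply: eq_esum => t _.
by rewrite /= ger0_norm.
Qed.

Lemma fine_esumRD f g : (forall t, 0 <= f t) -> (forall t, 0 <= g t) ->
  summableR f -> summableR g ->
  fine (esumR (f \+ g)) = fine (esumR f) + fine (esumR g).
Proof.
move=> f0 g0 sf sg; rewrite (eq_esum (b := fun t => (f t)%:E + (g t)%:E)%E)//.
rewrite esumD => [|t _|t _]; rewrite ?lee_fin//.
by rewrite fineD// ge0_esumR_fin_num.
Qed.

Lemma rsum_ge0E f : (forall t, 0 <= f t) -> rsum f = fine (esumR f).
Proof.
move=> f0; rewrite /rsum (esum1 (a := fun t => (Num.max (- f t) 0)%:E)) => [|t _].
  by rewrite subr0; congr fine; apply: eq_esum => t _; rewrite (max_idPl _).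
by rewrite (max_idPr _)// oppr_le0.
Qed.

Let pos f t := Num.max (f t) 0.
Let neg f t := Num.max (- f t) 0.

Let pos_ge0 f t : 0 <= pos f t. Proof. by rewrite le_max lexx orbT. Qed.
Let neg_ge0 f t : 0 <= neg f t. Proof. by rewrite le_max lexx orbT. Qed.

Let summable_pos f : summableR f -> summableR (pos f).
Proof.
apply: summableR_le => t; rewrite ger0_norm// ge_max normr_ge0 andbT.
exact: ler_norm.
Qed.

Let summable_neg f : summableR f -> summableR (neg f).
Proof.
apply: summableR_le => t; rewrite ger0_norm// ge_max normr_ge0 andbT.
by rewrite -normrN ler_norm.
Qed.

Let pos_sub_neg f t : pos f t - neg f t = f t.
Proof.
by rewrite /pos /neg; case: (leP 0 (f t)) => h; [rewrite (max_idPr _) ?subr0// oppr_le0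
  | rewrite (max_idPl _) ?sub0r ?opprK// oppr_ge0 ltW].
Qed.

Let pos_add_neg f t : pos f t + neg f t = `|f t|.
Proof.
rewrite /pos /neg; case: (leP 0 (f t)) => h.
  by rewrite (max_idPr _) ?addr0 ?ger0_norm// oppr_le0.
by rewrite (max_idPl _) ?add0r ?ltr0_norm// oppr_ge0 ltW.
Qed.

Lemma rsum_split f g h : (forall t, 0 <= g t) -> (forall t, 0 <= h t) ->
  summableR g -> summableR h -> (forall t, f t = g t - h t) ->
  rsum f = fine (esumR g) - fine (esumR h).
Proof.
move=> g0 h0 sg sh fE.
have sf : summableR f.
  apply: summableR_le (summableD sg (summableRZ (-1) sh)) => t.
  by rewrite /= fE mulN1r.
have cross : pos f \+ h = g \+ neg f.
  by apply/funext => t /=; move: (pos_sub_neg f t); rewrite fE; lra.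
have := congr1 (fun u => fine (esumR u)) cross => /=.
rewrite (@fine_esumRD (pos f) h) ?(@fine_esumRD g (neg f)) ?(summable_pos sf) ?(summable_neg sf)// => ?.
have -> : rsum f = fine (esumR (pos f)) - fine (esumR (neg f)) by [].
lra.
Qed.

Lemma rsumD f g : summableR f -> summableR g -> rsum (f \+ g) = rsum f + rsum g.
Proof.
move=> sf sg; have [spf snf] := (summable_pos sf, summable_neg sf).
have [spg sng] := (summable_pos sg, summable_neg sg).
have fg_split t : (f \+ g) t = (pos f \+ pos g) t - (neg f \+ neg g) t.
  by rewrite /= -(pos_sub_neg f) -(pos_sub_neg g); lra.
rewrite (rsum_split (fun t => addr_ge0 (pos_ge0 f t) (pos_ge0 g t))
           (fun t => addr_ge0 (neg_ge0 f t) (neg_ge0 g t))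
           (summableD spf spg) (summableD snf sng) fg_split).
rewrite (@fine_esumRD (pos f) (pos g)) ?(@fine_esumRD (neg f) (neg g))//.
rewrite /rsum -/(pos f) -/(pos g) -/(neg f) -/(neg g).
lra.
Qed.

Lemma fine_esumRZ f k : 0 <= k -> (forall t, 0 <= f t) -> summableR f ->
  fine (esumR (fun t => k * f t)) = k * fine (esumR f).
Proof.
move=> k0 f0 sf; rewrite (eq_esum (b := fun t => k%:E * (f t)%:E)%E) => [|t _].
  by rewrite ge0_esumZl// fineM// ge0_esumR_fin_num.
by rewrite EFinM.
Qed.

Lemma rsumZ f k : summableR f -> rsum (fun t => k * f t) = k * rsum f.
Proof.
move=> sf; have [sp sn] := (summable_pos sf, summable_neg sf).
have -> : rsum f = fine (esumR (pos f)) - fine (esumR (neg f)) by [].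
have [k0|k0] := leP 0 k.
  rewrite (@rsum_split _ (fun t => k * pos f t) (fun t => k * neg f t)).
  - by rewrite (@fine_esumRZ (pos f) k) ?(@fine_esumRZ (neg f) k) ?mulrBr.
  - by move=> t; rewrite mulr_ge0.
  - by move=> t; rewrite mulr_ge0.
  - exact: summableRZ.
  - exact: summableRZ.
  - by move=> t; rewrite -mulrBr pos_sub_neg.
have nk0 : 0 <= - k by rewrite oppr_ge0 ltW.
rewrite (@rsum_split _ (fun t => - k * neg f t) (fun t => - k * pos f t)).
- by rewrite (@fine_esumRZ (neg f) (- k)) ?(@fine_esumRZ (pos f) (- k)) //; lra.
- by move=> t; rewrite mulr_ge0.
- by move=> t; rewrite mulr_ge0.
- exact: summableRZ.
- exact: summableRZ.
- by move=> t; rewrite -(pos_sub_neg f t); ring.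
Qed.

Lemma rsum_ge0 f : (forall t, 0 <= f t) -> 0 <= rsum f.
Proof.
move=> f0; rewrite rsum_ge0E//; apply: fine_ge0; apply: esum_ge0 => t _.
by rewrite lee_fin.
Qed.

Lemma ler_rsum f g : summableR f -> summableR g -> (forall t, f t <= g t) ->
  rsum f <= rsum g.
Proof.
move=> sf sg fg; have sgf : summableR (fun t => g t - f t).
  apply: summableR_le (summableD sg (summableRZ (-1) sf)) => t.
  by rewrite /= mulN1r.
have -> : g = f \+ (fun t => g t - f t) by apply/funext => t /=; rewrite subrKC.
by rewrite rsumD// lerDl rsum_ge0// => t; rewrite subr_ge0.
Qed.

Lemma ler_point_rsum f t0 : (forall t, 0 <= f t) -> summableR f -> f t0 <= rsum f.
Proof.
move=> f0 sf; rewrite rsum_ge0E// -lee_fin fineK ?ge0_esumR_fin_num//.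
by apply: esum_ge; exists [set t0]%classic; rewrite ?fsbig_set1//; split.
Qed.

Lemma ler_norm_rsum f : summableR f -> `|rsum f| <= rsum (fun t => `|f t|).
Proof.
move=> sf; have [sp sn] := (summable_pos sf, summable_neg sf).
rewrite [leRHS]rsum_ge0E// (eq_esum (b := fun t => (pos f t + neg f t)%:E)) => [|t _].
  rewrite (@fine_esumRD (pos f) (neg f))//.
  have -> : rsum f = fine (esumR (pos f)) - fine (esumR (neg f)) by [].
  apply: le_trans (ler_normB _ _) _.
  by rewrite !ger0_norm -?rsum_ge0E ?rsum_ge0.
by rewrite pos_add_neg.
Qed.

End real_sum.

Lemma powR_normB_le (R : realType) (p x y : R) : 0 <= p ->
  `|x - y| `^ p <= 2 `^ p * (`|x| `^ p + `|y| `^ p).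
Proof.
move=> p0; set M := Num.max `|x| `|y|.
have M0 : 0 <= M by rewrite le_max normr_ge0.
have xyM : `|x - y| <= 2 * M.
  by rewrite (le_trans (ler_normB _ _))// mulr2n mulrDl mul1r lerD// le_max lexx ?orbT.
apply: le_trans (_ : (2 * M) `^ p <= _); first by rewrite ge0_ler_powR ?nnegrE ?mulr_ge0.
rewrite powRM// ler_wpM2l ?powR_ge0// /M.
by rewrite /Order.max; case: ifP => _; rewrite ?lerDl ?lerDr powR_ge0.
Qed.

Lemma powRB1_mul_le (R : realType) (p a y : R) : 1 <= p -> 0 <= a -> 0 <= y ->
  a `^ (p - 1) * y <= a `^ p + y `^ p.
Proof.
move=> p1 a0 y0; have p_gt0 := lt_le_trans ltr01 p1.
have [ya|ay] := leP y a.
  apply: le_trans (ler_wpM2l (powR_ge0 _ _) ya) _.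
  by rewrite mulrC mulr_powRB1// lerDl powR_ge0.
have ay' : a `^ (p - 1) <= y `^ (p - 1).
  by rewrite ge0_ler_powR ?nnegrE ?subr_ge0 ?(ltW ay).
apply: le_trans (ler_wpM2r y0 ay') _.
by rewrite mulrC mulr_powRB1// lerDr powR_ge0.
Qed.

Section mean_deviation.
Variables (R : realType) (V : choiceType) (p : R) (nu : V -> R).
Hypotheses (p1 : 1 <= p) (nu_ge0 : forall t, 0 <= nu t) (nu_fin : (esumR nu < +oo)%E).
Implicit Types (g : V -> R).

Let summable_nu : summableR nu := ge0_summableR nu_ge0 nu_fin.

Let summable_mul_nu g : summableR (fun t => nu t * `|g t| `^ p) ->
  summableR (fun t => g t * nu t).
Proof.
move=> sg; apply: summableR_le (summableD summable_nu sg) => t /=.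
rewrite normrM (ger0_norm (nu_ge0 t)) [leRHS]ger0_norm ?addr_ge0 ?mulr_ge0 ?powR_ge0//.
have h : `|g t| <= 1 + `|g t| `^ p.
  by have := powRB1_mul_le p1 ler01 (normr_ge0 (g t)); rewrite !powR1 mul1r.
by rewrite mulrC; have := ler_wpM2l (nu_ge0 t) h; rewrite mulrDr mulr1.
Qed.

Lemma rsum_mean_powR_le g : summableR (fun t => nu t * `|g t| `^ p) ->
  `|rsum (fun t => g t * nu t) / rsum nu| `^ p * rsum nu
    <= 2 `^ p * rsum (fun t => nu t * `|g t| `^ p).
Proof.
move=> sg; set n := rsum nu; set alpha := rsum (fun t => nu t * `|g t| `^ p).
have alpha0 : 0 <= alpha by rewrite rsum_ge0// => t; rewrite mulr_ge0 ?powR_ge0.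
have [->|n_neq0] := eqVneq n 0; first by rewrite mulr0 mulr_ge0 ?powR_ge0.
have n_gt0 : 0 < n by rewrite lt0r n_neq0 rsum_ge0.
set m := rsum _ / n; set a := `|m| / 2.
have a0 : 0 <= a by rewrite divr_ge0.
have sgnu := summable_mul_nu sg.
have mean_le : `|m| * n <= rsum (fun t => `|g t * nu t|).
  by rewrite -(ger0_norm (ltW n_gt0)) -normrM divfK// ler_norm_rsum.
have young : a `^ (p - 1) * rsum (fun t => `|g t * nu t|) <= a `^ p * n + alpha.
  have sabs : summableR (fun t => `|g t * nu t|).
    by apply: summableR_le sgnu => t; rewrite normr_id.
  rewrite -rsumZ// -rsumZ// -rsumD; [|exact: summableRZ|exact: sg].
  apply: ler_rsum => [||t /=]; [exact: summableRZ | exact: summableD (summableRZ _ summable_nu) sg|].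
  rewrite normrM (ger0_norm (nu_ge0 t)) mulrA [nu t * _]mulrC -mulrDl ler_wpM2r//.
  exact: powRB1_mul_le.
have m2a : `|m| = 2 * a by rewrite /a mulrC divfK ?pnatr_eq0.
have apn_le : a `^ p * n <= alpha.
  have := le_trans (ler_wpM2l (powR_ge0 _ _) mean_le) young.
  have -> : a `^ (p - 1) * (`|m| * n) = 2 * (a `^ p * n).
    by rewrite m2a -(mulr_powRB1 a0 (lt_le_trans ltr01 p1)); ring.
  lra.
by rewrite m2a powRM// -mulrA ler_wpM2l ?powR_ge0.
Qed.

Lemma esum_powR_sub_mean_le (b : V -> R) (c : R) : 0 < rsum nu ->
  (\esum_(t in [set: V]) (`|b t - rsum (fun t => b t * nu t) / rsum nu| `^ p * nu t)%:E
    <= (2 `^ p * (1 + 2 `^ p))%:E * esumR (fun t => nu t * `|b t - c| `^ p))%E.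
Proof.
move=> n_gt0; set n := rsum nu; set g := fun t => b t - c.
have K_gt0 : 0 < 2 `^ p * (1 + 2 `^ p) by rewrite mulr_gt0 ?addr_gt0 ?powR_gt0.
have dev_ge0 t : 0 <= nu t * `|g t| `^ p by rewrite mulr_ge0 ?powR_ge0.
have [->|A_fin] := eqVneq (esumR (fun t => nu t * `|g t| `^ p)) +oo%E.
  by rewrite gt0_muley ?leey.
have sg : summableR (fun t => nu t * `|g t| `^ p) by rewrite ge0_summableR ?ltey.
set alpha := rsum (fun t => nu t * `|g t| `^ p).
have A_E : esumR (fun t => nu t * `|g t| `^ p) = alpha%:E.
  by rewrite /alpha rsum_ge0E// fineK ?ge0_esumR_fin_num.
have N_E : esumR nu = n%:E by rewrite /n rsum_ge0E// fineK ?ge0_esumR_fin_num.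
set m := rsum (fun t => g t * nu t) / n.
have mean_shift : rsum (fun t => b t * nu t) / n = m + c.
  have -> : (fun t => b t * nu t) = (fun t => g t * nu t) \+ (fun t => c * nu t).
    by apply/funext => t /=; rewrite /g; ring.
  rewrite rsumD ?rsumZ ?summableRZ ?summable_mul_nu// /m -/n.
  by field; rewrite gt_eqF.
apply: (@le_trans _ _ (esumR (fun t => 2 `^ p * (nu t * `|g t| `^ p)
                                      + 2 `^ p * `|m| `^ p * nu t))).
  apply: le_esum => t _; rewrite lee_fin mean_shift.
  have -> : b t - (m + c) = g t - m by rewrite /g; ring.
  have -> : 2 `^ p * (nu t * `|g t| `^ p) + 2 `^ p * `|m| `^ p * nu t
            = 2 `^ p * (`|g t| `^ p + `|m| `^ p) * nu t by ring.
  by rewrite ler_wpM2r// powR_normB_le// (le_trans ler01).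
rewrite (eq_esum (b := fun t => (2 `^ p)%:E * (nu t * `|g t| `^ p)%:E
                               + (2 `^ p * `|m| `^ p)%:E * (nu t)%:E)%E); last first.
  by move=> t _; rewrite -!EFinM.
rewrite esumD => [|t _|t _]; rewrite ?mule_ge0 ?lee_fin ?powR_ge0 ?mulr_ge0//.
rewrite !ge0_esumZl ?lee_fin ?powR_ge0 ?mulr_ge0// A_E N_E -!EFinM -EFinD lee_fin.
have := rsum_mean_powR_le sg; rewrite -/alpha -/n -/m => mean_le.
have := ler_wpM2l (powR_ge0 2 p) mean_le; lra.
Qed.

End mean_deviation.

Section tree_increments.
Variables (V : eqType) (T : rooted_tree V).

Lemma depth_iter_parent k t : (k <= depth T t)%N ->
  depth T (iter k (parent T) t) = (depth T t - k)%N.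
Proof.
elim: k => [|k IH] lekt; first by rewrite subn0.
have neq_root : iter k (parent T) t <> troot T.
  by move=> eq_root; move: (IH (ltnW lekt)); rewrite eq_root depth_root; lia.
by rewrite iterS; move: (depth_parent neq_root); rewrite IH ?(ltnW lekt) //; lia.
Qed.

Lemma iter_depth_parent t : iter (depth T t) (parent T) t = troot T.
Proof.
apply/eqP/negP => /negP/eqP neq_root.
by move: (depth_parent neq_root); rewrite depth_iter_parent // subnn.
Qed.

Definition increment (R : zmodType) (b : V -> R) (t : V) : R :=
  if t == troot T then 0 else b t - b (parent T t).

Lemma path_sum_increment (R : realType) (b : V -> R) t :
  path_sum T (increment b) t = b t - b (troot T).
Proof.
suff partial_sum n : (n <= depth T t)%N ->
    \sum_(k < n) increment b (iter k (parent T) t) = b t - b (iter n (parent T) t).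
  by rewrite /path_sum partial_sum // iter_depth_parent.
elim: n => [|n IH] le_n; first by rewrite big_ord0 subrr.
rewrite big_ord_recr IH ?(ltnW le_n) //= /increment ifN; last first.
  by apply/eqP => eq_root; move: (depth_iter_parent (ltnW le_n)); rewrite eq_root depth_root; lia.
by rewrite addrA subrK.
Qed.

End tree_increments.

Lemma esum_increment (R : realType) (V : choiceType) (T : rooted_tree V)
    (p : R) (mu b : V -> R) : p != 0 ->
  (\esum_(t in [set: V]) (mu t * `|increment T b t| `^ p)%:E
   = \esum_(t in [set~ troot T]) (`|b t - b (parent T t)| `^ p * mu t)%:E)%E.
Proof.
move=> p_neq0; rewrite [RHS]esum_mkcond; apply: eq_esum => t _.
rewrite /increment; case: (eqVneq t (troot T)) => [->|neq_root].
  by rewrite normr0 powR0// mulr0; case: ifPn => // /set_mem /(_ erefl).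
have t_in : t \in [set~ troot T]%classic by apply/mem_set/eqP.
by rewrite t_in [in LHS]mulrC.
Qed.

Theorem lemma2p1 (R : realType) (p C : R) (hp : 1 <= p) :
  exists CP : R, 0 < CP /\
  forall (V : choiceType) (T : rooted_tree V) (nu mu : V -> R),
    (forall t, 0 < nu t) -> (forall t, 0 < mu t) ->
    (\esum_(t in [set: V]) (nu t)%:E < +oo)%E ->
    (\esum_(t in [set: V]) (mu t)%:E < +oo)%E ->
    (forall b : V -> R,
       (poweR (\esum_(t in [set: V]) (nu t * `|path_sum T b t| `^ p)%:E) p^-1
        <= C%:E * poweR (\esum_(t in [set: V]) (mu t * `|b t| `^ p)%:E) p^-1)%E) ->
    forall b : V -> R,
      let bbar := rsum (fun t => b t * nu t) / rsum nu in
      (poweR (\esum_(t in [set: V]) (`|b t - bbar| `^ p * nu t)%:E) p^-1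
       <= CP%:E * poweR (\esum_(t in [set~ troot T])
                     (`|b t - b (parent T t)| `^ p * mu t)%:E) p^-1)%E.
Proof.
have p_gt0 : 0 < p by exact: lt_le_trans hp.
set K := 2 `^ p * (1 + 2 `^ p).
have K_gt0 : 0 < K by rewrite mulr_gt0 ?addr_gt0 ?powR_gt0.
exists (K `^ p^-1 * (`|C| + 1)); split; first by rewrite mulr_gt0 ?powR_gt0 ?ltr_pwDr.
move=> V T nu mu nu_gt0 _ nu_fin _ hardy b; cbv zeta.
have nu_ge0 t : 0 <= nu t by exact: ltW.
have := hardy (increment T b); rewrite esum_increment ?gt_eqF//.
under eq_esum do rewrite path_sum_increment.
move=> hardy_b.
have n_gt0 : 0 < rsum nu.
  exact: lt_le_trans (nu_gt0 (troot T)) (ler_point_rsum _ nu_ge0 (ge0_summableR nu_ge0 nu_fin)).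
have := esum_powR_sub_mean_le hp nu_ge0 nu_fin b (b (troot T)) n_gt0; rewrite -/K.
set S := esum _ _; set A := esum _ _; set B := esum _ _ in hardy_b *.
move=> dev.
have [S0 A0] : (0 <= S /\ 0 <= A)%E.
  by split; apply: esum_ge0 => t _; rewrite lee_fin mulr_ge0 ?powR_ge0.
have dev_p : (S `^ p^-1 <= (K%:E * A) `^ p^-1)%E.
  apply: gt0_ler_poweR; rewrite ?in_itv/= ?leey ?andbT ?invr_ge0 ?(ltW p_gt0)//.
  by rewrite mule_ge0 ?lee_fin ?(ltW K_gt0).
apply: le_trans dev_p _.
rewrite poweRM ?lee_fin ?(ltW K_gt0) // poweR_EFin EFinM -muleA lee_wpmul2l ?lee_fin ?powR_ge0 //.
apply: le_trans hardy_b _.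
by rewrite lee_wpmul2r ?poweR_ge0 // lee_fin (le_trans (ler_norm C)) // lerDl.
Qed.
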